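(* Let $G_{\tan\cup\sec}$ be the $q$-grammar with master variables $\{x,y\}$, rule $x_j\mapsto q^j(1+x_jx_{j+1})$, $y_j\mapsto q^jx_jy_{j+1}$ ($j\ge0$), and order DIO, with $q$-derivative $D$. Then for $n\ge3$, every term of $D^n(x_0)$ takes exactly one of the following forms: (i) $x_nx_{n-1}^{\,n}$; (ii) $x_1^{\,n}x_0$; (iii) $x_{j+1}^{\,a}x_j^{\,b}$ with $a,b\le n$, $1\le j\le n-2$, $a+b\le n+1$, and $a+b+n+1$ even.
   Context: $\mathbb{K}$ is a commutative ring with unity and characteristic zero, $q$ an indeterminate. For a set $S$ of master variables, $\mathbb{S}=\{s_i:s\in S,\ i\ge0\}$ is a set of non-commuting variables, $F(\mathbb{S})$ the free group on $\mathbb{S}$, $\mathbb{E}=\mathbb{K}[q][F(\mathbb{S})]$ its group algebra. A rule $R$ assigns to each $s_i$ an element of $\mathbb{E}$. The up-arrow $\uparrow$ is the linear map replacing each letter $s_i^{\pm1}$ of a word by $s_{i+1}^{\pm1}$. DIO is the order that stably reorders the letters of a word according to the position of their underlying variable in the sequence $\dots,x_2,y_2,x_1,y_1,x_0,y_0$ (extended linearly). The $q$-derivative of a $q$-grammar $(S,R,\rho)$ is the $\mathbb{K}[q]$-linear map with $D(w_1\cdots w_n)=\sum_{j=1}^n\rho\big(w_1\cdots w_{j-1}R(w_j)\uparrow(w_{j+1}\cdots w_n)\big)$ for letters $w_j$, $D^0=\mathrm{id}$, $D^k=D\circ D^{k-1}$. Writing an element of $\mathbb{E}$ as $\sum_{w\in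 F(\mathbb{S})}a_ww$, its terms are the words $w$ (including possibly the empty word) with $a_w\ne0$. *)

From HB Require Import structures.
From mathcomp Require Import all_boot all_order all_algebra.
Set Implicit Arguments. Unset Strict Implicit. Unset Printing Implicit Defensive.
Import GRing.Theory.
Local Open Scope ring_scope.

Inductive mvar := MX | MY.
Definition mvar_code (v : mvar) : bool := if v is MX then true else false.
Definition mvar_decode (b : bool) : mvar := if b then MX else MY.
Lemma mvar_codeK : cancel mvar_code mvar_decode. Proof. by case. Qed.
HB.instance Definition _ := Equality.copy mvar (can_type mvar_codeK).

Definition letter := (mvar * nat)%type.
Definition word := seq letter.

Definition up (w : word) : word := [seq (l.1, l.2.+1) | l <- w].

(* DIO: position in the sequence ..., x_2, y_2, x_1, y_1, x_0, y_0.
   dio_le a b : a does not come strictly after b. *)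
Definition dio_le (a b : letter) : bool :=
  (b.2 < a.2)%N || ((a.2 == b.2) && ((a.1 == MX) || (b.1 == MY))).
(* Stable reordering (mathcomp's merge sort is stable). *)
Definition dio (w : word) : word := sort dio_le w.

(* Elements of E = K[q][F(S)] are represented as formal finite sums:
   lists of (coefficient, word) pairs; the coefficient of a word is the sum of
   the coefficients of its occurrences. *)
Definition elem (K : comNzRingType) := seq ({poly K} * word).

Definition coefE (K : comNzRingType) (e : elem K) (w : word) : {poly K} :=
  \sum_(p <- e | p.2 == w) p.1.

Definition is_term (K : comNzRingType) (e : elem K) (w : word) : Prop :=
  coefE e w != 0.

Definition rule_tansec (K : comNzRingType) (l : letter) : elem K :=
  let j := l.2 in
  match l.1 with
  | MX => [:: ('X ^+ j, [::]); ('X ^+ j, [:: (MX, j); (MX, j.+1)])]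
  | MY => [:: ('X ^+ j, [:: (MX, j); (MY, j.+1)])]
  end.

Definition qder_word (K : comNzRingType) (R : letter -> elem K)
    (rho : word -> word) (w : word) : elem K :=
  flatten [seq [seq (p.1, rho (take j w ++ p.2 ++ up (drop j.+1 w)))
               | p <- R (nth (MX, 0%N) w j)] | j <- iota 0 (size w)].

Definition qder (K : comNzRingType) (R : letter -> elem K)
    (rho : word -> word) (e : elem K) : elem K :=
  flatten [seq [seq (a.1 * p.1, p.2) | p <- qder_word R rho a.2] | a <- e].

Definition D_tansec (K : comNzRingType) (n : nat) (e : elem K) : elem K :=
  iter n (qder (@rule_tansec K) dio) e.

Definition x_ (j : nat) : letter := (MX, j).

Definition exactly_one3 (P1 P2 P3 : Prop) : Prop :=
  (P1 /\ ~ P2 /\ ~ P3) \/ (~ P1 /\ P2 /\ ~ P3) \/ (~ P1 /\ ~ P2 /\ P3).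

From Pilot Require Import Defs.
From mathcomp Require Import all_boot all_order all_algebra zify.
Set Implicit Arguments. Unset Strict Implicit. Unset Printing Implicit Defensive.

(* Every word of D^n(x_0) is, once sorted by DIO, a block x_{j+1}^a x_j^b.
   Differentiating one letter of a block either deletes it or doubles it into
   two letters, and shifts every letter to its right up by one; the result is
   again a block, at level j or j+1, with one letter fewer or more.  Tracking
   a, b, j through this step shows that the three families of the statement
   are preserved from n to n+1 once n >= 2, and the family at n = 3 is checked
   by computation.  The families are told apart by how many letters x_n and
   x_0 they contain.  Only the words occurring in the formal sum are tracked,
   never their coefficients, so characteristic zero is not needed. *)

Lemma mvar_eqE (u v : mvar) :
  (u == v) = match u, v with MX, MX | MY, MY => true | _, _ => false end.
Proof. by case: u; case: v. Qed.

Lemma dio_le_total : total dio_le.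
Proof. by move=> [[] i] [[] k]; rewrite /dio_le /= ?mvar_eqE; lia. Qed.

Lemma dio_le_trans : transitive dio_le.
Proof. by move=> [[] i] [[] k] [[] l]; rewrite /dio_le /= ?mvar_eqE; lia. Qed.

Lemma dio_le_anti : antisymmetric dio_le.
Proof. by move=> [[] i] [[] k]; rewrite /dio_le /= ?mvar_eqE => le_ik; congr pair; lia. Qed.

Lemma dio_perm_sorted s t : perm_eq s t -> sorted dio_le t -> dio s = t.
Proof.
move=> /(perm_sortP dio_le_total dio_le_trans dio_le_anti) s_t t_sorted.
by rewrite /dio s_t sorted_sort //; apply: dio_le_trans.
Qed.

Lemma exactly_one3_classify (T : eqType) (t c1 c2 c3 : T) (P1 P2 P3 : Prop) :
  uniq [:: c1; c2; c3] -> (P1 -> t = c1) -> (P2 -> t = c2) -> (P3 -> t = c3) ->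
  [\/ P1, P2 | P3] -> exactly_one3 P1 P2 P3.
Proof.
rewrite /= !inE andbT => /andP[/norP[/eqP c12 /eqP c13] /eqP c23] t1 t2 t3.
case=> [/[dup] p1 /t1 tc | /[dup] p2 /t2 tc | /[dup] p3 /t3 tc].
- by left; split=> //; split=> [/t2 | /t3]; rewrite tc.
- by right; left; split=> [/t1 | ]; [rewrite tc => /esym | split=> // /t3; rewrite tc].
- by right; right; split=> [/t1 | ]; [rewrite tc => /esym | split=> // /t2; rewrite tc => /esym].
Qed.

Definition block (j a b : nat) : word := nseq a (x_ j.+1) ++ nseq b (x_ j).

Lemma blockS0 j b : block j.+1 0 b = block j b 0.
Proof. by rewrite /block cats0. Qed.

Lemma count_block (q : pred letter) j a b :
  count q (block j a b) = q (x_ j.+1) * a + q (x_ j) * b.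
Proof. by rewrite count_cat !count_nseq. Qed.

Lemma count_mem_block m j a b :
  count_mem (x_ m) (block j a b) = (j.+1 == m) * a + (j == m) * b.
Proof. by rewrite count_block /= !xpair_eqE. Qed.

Lemma sorted_block j a b : sorted dio_le (block j a b).
Proof.
have le_x m k : (k <= m)%N -> dio_le (x_ m) (x_ k) by rewrite /dio_le /=; lia.
have pairwise_nseq m x : dio_le x x -> pairwise dio_le (nseq m x).
  by move=> le_xx; elim: m => //= m ->; rewrite all_nseq le_xx orbT.
apply: pairwise_sorted; rewrite pairwise_cat !pairwise_nseq ?le_x // !andbT.
by apply/allrelP => _ _ /nseqP[-> _] /nseqP[-> _]; apply: le_x.
Qed.

Lemma dio_block s j a b :
  (forall q : pred letter, count q s = q (x_ j.+1) * a + q (x_ j) * b) ->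
  dio s = block j a b.
Proof.
move=> count_s; apply: dio_perm_sorted (sorted_block j a b).
by apply/permP => q; rewrite count_s count_block.
Qed.

Lemma up_nseq k m : up (nseq k (x_ m)) = nseq k (x_ m.+1).
Proof. exact: map_nseq. Qed.

Definition rule_words (l : letter) : seq word :=
  if l.1 is MX then [:: [::]; [:: x_ l.2; x_ l.2.+1]] else [:: [:: x_ l.2; (MY, l.2.+1)]].

Lemma rule_words_x m : rule_words (x_ m) = [:: [::]; [:: x_ m; x_ m.+1]].
Proof. by []. Qed.

Definition derive_word (w : word) : seq word :=
  flatten [seq [seq dio (take i w ++ p ++ up (drop i.+1 w))
               | p <- rule_words (nth (MX, 0) w i)] | i <- iota 0 (size w)].

Definition derive_words (ws : seq word) : seq word := flatten (map derive_word ws).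

Definition D_tansec_words (n : nat) : seq word := iter n derive_words [:: [:: x_ 0]].

Lemma map_snd_qder (K : comNzRingType) (e : elem K) :
  map snd (qder (@rule_tansec K) dio e) = derive_words (map snd e).
Proof.
elim: e => //= [[c w] e] IHe; rewrite map_cat IHe -map_comp map_flatten -map_comp.
congr (flatten _ ++ _); apply: eq_map => i /=.
by rewrite -map_comp; case: (nth _ w i) => [[] k].
Qed.

Lemma map_snd_D_tansec (K : comNzRingType) n :
  map snd (D_tansec n [:: (1%R : {poly K}, [:: x_ 0])]) = D_tansec_words n.
Proof. by elim: n => //= n IHn; rewrite map_snd_qder IHn. Qed.

Lemma is_term_mem_snd (K : comNzRingType) (e : elem K) w :
  is_term e w -> w \in map snd e.
Proof.
apply: contraR => w_notin; rewrite /is_term /Defs.coefE big1_seq //.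
by move=> cw /andP[/eqP cw_w cw_e]; move: w_notin; rewrite -cw_w map_f.
Qed.

Lemma mem_derive_word w w' :
  w' \in derive_word w ->
  exists2 i, i < size w &
    exists2 p, p \in rule_words (nth (MX, 0) w i) &
      w' = dio (take i w ++ p ++ up (drop i.+1 w)).
Proof.
case/flattenP=> ws /mapP[i]; rewrite mem_iota => /andP[_ lt_i] -> /mapP[p p_rule ->].
by exists i => //; exists p.
Qed.

Lemma mem_derive_block j a b w :
  w \in derive_word (block j a b) ->
  (exists2 i, i < a &
     w = block j.+1 (a - i.+1) (i + b) \/ w = block j.+1 (a - i) (i.+1 + b)) \/
  (exists2 i, i < b &
     w = block j (a + b - i.+1) i \/ w = block j (a + b - i) i.+1).
Proof.
case/mem_derive_word=> k; rewrite size_cat !size_nseq => lt_k_ab [p].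
have [lt_k_a | le_a_k] := ltnP k a.
- have -> : nth (MX, 0) (block j a b) k = x_ j.+1.
    by rewrite nth_cat size_nseq lt_k_a nth_nseq lt_k_a.
  have -> : take k (block j a b) = nseq k (x_ j.+1).
    by rewrite take_cat size_nseq lt_k_a take_nseq // ltnW.
  have -> : drop k.+1 (block j a b) = nseq (a - k.+1) (x_ j.+1) ++ nseq b (x_ j).
    rewrite drop_cat size_nseq drop_nseq; case: ltnP => // le_a_k1.
    have -> : a = k.+1 by lia.
    by rewrite subnn drop0.
  rewrite rule_words_x !inE /up map_cat -!/(up _) !up_nseq.
  move=> /orP[] /eqP-> ->; left; exists k => //; [left | right];
    apply: dio_block => q; rewrite !count_cat !count_nseq /=;
    by case: (q (x_ j.+1)) (q (x_ j.+2)); lia.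
- have lt_i_b : k - a < b by lia.
  have -> : nth (MX, 0) (block j a b) k = x_ j.
    by rewrite nth_cat size_nseq ltnNge le_a_k /= nth_nseq lt_i_b.
  have -> : take k (block j a b) = nseq a (x_ j.+1) ++ nseq (k - a) (x_ j).
    by rewrite take_cat size_nseq ltnNge le_a_k /= take_nseq // ltnW.
  have -> : drop k.+1 (block j a b) = nseq (b - (k - a).+1) (x_ j).
    by rewrite drop_cat size_nseq ltnNge ltnW //= drop_nseq subSn.
  rewrite rule_words_x !inE !up_nseq.
  move=> /orP[] /eqP-> ->; right; exists (k - a) => //; [left | right];
    apply: dio_block => q; rewrite !count_cat !count_nseq /=;
    by case: (q (x_ j.+1)) (q (x_ j)); lia.
Qed.

Definition tansec_mid (n j a b : nat) : bool :=
  [&& (a <= n) && (b <= n), 1 <= j <= n - 2, a + b <= n.+1 & ~~ odd (a + b + n.+1)].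

Definition tansec_word (n : nat) (w : word) : Prop :=
  [\/ w = block n.-1 1 n, w = block 0 n 1
    | exists j a b, w = block j a b /\ tansec_mid n j a b].

Lemma tansec_word_mid n j a b : tansec_mid n j a b -> tansec_word n (block j a b).
Proof. by move=> mid_jab; apply: Or33; exists j, a, b. Qed.

Lemma tansec_word_derive_mid n j a b w :
  tansec_mid n j a b -> w \in derive_word (block j a b) -> tansec_word n.+1 w.
Proof.
move=> mid_jab /mem_derive_block[] [i lt_i [->|->]];
  by apply: tansec_word_mid; move: mid_jab; rewrite /tansec_mid; lia.
Qed.

Lemma tansec_word_derive_top n w :
  1 < n -> w \in derive_word (block n.-1 1 n) -> tansec_word n.+1 w.
Proof.
move=> n_gt1 /mem_derive_block[] [i lt_i].
- have -> : i = 0 by lia.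
  rewrite subnn add0n blockS0 => -[-> | ->].
    by apply: tansec_word_mid; rewrite /tansec_mid; lia.
  by apply: Or31; rewrite prednK // ltnW.
- by move=> [-> | ->]; apply: tansec_word_mid; rewrite /tansec_mid; lia.
Qed.

Lemma tansec_word_derive_bottom n w :
  1 < n -> w \in derive_word (block 0 n 1) -> tansec_word n.+1 w.
Proof.
move=> n_gt1 /mem_derive_block[] [i lt_i].
- by move=> [-> | ->]; apply: tansec_word_mid; rewrite /tansec_mid; lia.
- have -> : i = 0 by lia.
  rewrite addn1 subn1 /= => -[-> | ->]; last exact: Or32.
  by rewrite -blockS0; apply: tansec_word_mid; rewrite /tansec_mid; lia.
Qed.

Lemma tansec_word_derive n w w' :
  1 < n -> tansec_word n w -> w' \in derive_word w -> tansec_word n.+1 w'.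
Proof.
move=> n_gt1 [-> | -> | [j [a [b [-> mid_jab]]]]].
- exact: tansec_word_derive_top.
- exact: tansec_word_derive_bottom.
- exact: tansec_word_derive_mid.
Qed.

Definition tansec_wordb (n : nat) (w : word) : bool :=
  let r := iota 0 n.+2 in
  [|| w == block n.-1 1 n, w == block 0 n 1
    | has (fun j => has (fun a => has (fun b =>
        (w == block j a b) && tansec_mid n j a b) r) r) r].

Lemma tansec_wordb_sound n w : tansec_wordb n w -> tansec_word n w.
Proof.
case/or3P=> [/eqP-> | /eqP-> | ]; [exact: Or31 | exact: Or32 |].
case/hasP=> j _ /hasP[a _ /hasP[b _ /andP[/eqP-> mid_jab]]].
exact: tansec_word_mid.
Qed.

(* The induction cannot start earlier: D^2(x_0) contains the word x_1. *)
Lemma tansec_wordb_D_tansec_words3 : all (tansec_wordb 3) (D_tansec_words 3).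
Proof. by vm_compute. Qed.

Lemma tansec_word_D_tansec_words n w :
  2 < n -> w \in D_tansec_words n -> tansec_word n w.
Proof.
elim: n w => // n IHn w; rewrite ltnS leq_eqVlt => /orP[/eqP<- | n_gt2] w_in.
  exact/tansec_wordb_sound/(allP tansec_wordb_D_tansec_words3).
case/flattenP: w_in => ws /mapP[w0 w0_in ->] w_in.
by apply: tansec_word_derive (IHn w0 n_gt2 w0_in) w_in; apply: ltnW.
Qed.

Local Open Scope ring_scope.

Theorem proposition3p8 (K : comNzRingType)
    (charK0 : forall m : nat, (m.+1)%:R != 0 :> K)
    (n : nat) (hn : (3 <= n)%N) (w : word) :
  is_term (D_tansec n [:: (1 : {poly K}, [:: x_ 0])]) w ->
  exactly_one3
    (w = x_ n :: nseq n (x_ n.-1))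
    (w = nseq n (x_ 1) ++ [:: x_ 0])
    (exists a b j : nat,
        [/\ w = nseq a (x_ j.+1) ++ nseq b (x_ j),
            (a <= n)%N && (b <= n)%N,
            (1 <= j <= n - 2)%N,
            (a + b <= n.+1)%N & ~~ odd (a + b + n.+1)]).
Proof.
move=> /is_term_mem_snd; rewrite map_snd_D_tansec.
move=> /(tansec_word_D_tansec_words hn) w_tansec.
have top_block : x_ n :: nseq n (x_ n.-1) = block n.-1 1 n by case: n hn {w_tansec}.
apply: (@exactly_one3_classify _ (count_mem (x_ n) w, count_mem (x_ 0) w)
          (1, 0)%N (0, 1)%N (0, 0)%N) => //.
- by move=> ->; rewrite top_block !count_mem_block; congr pair; lia.
- by move=> ->; rewrite -/(block 0 n 1) !count_mem_block; congr pair; lia.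
- case=> a [b [j [-> _ j_range _ _]]].
  by rewrite -/(block j a b) !count_mem_block; congr pair; lia.
case: w_tansec => [-> | -> | [j [a [b [-> mid_jab]]]]]; [exact/Or31 | exact/Or32 |].
by apply: Or33; exists a, b, j; case/and4P: mid_jab.
Qed.
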